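(* Let $\xi>0$ be real, let $b\ge0$ and $N\ge2$ be integers, and for integers $0\le d\le N-1$ and $0\le l\le 2d$ put \begin{equation*} f_{d,l} = \exp\left(\frac{(2b+1)(d^2+d)\xi}{2N}\right) \cdot 2\sinh\left(\frac{(2d+1)\xi}{2N}\right) \cdot \prod_{k=1}^{l}4 \sinh\left(\frac{(2d+1+k)\xi}{2N}\right) \sinh\left(\frac{(2d+1-k)\xi}{2N}\right). \end{equation*} Then for all integers $l,d$ with $1\le d\le N-1$ and $0\le l\le2d-2$ we have $f_{d,l}> f_{d-1,l}$. *)

From Stdlib Require Import Reals.
Open Scope R_scope.

Fixpoint prod_1_to (l : nat) (g : nat -> R) : R :=
  match l with
  | O => 1
  | S l' => prod_1_to l' g * g l
  end.

Definition fdl (xi : R) (b N d l : nat) : R :=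
  exp ((2 * INR b + 1) * (INR d ^ 2 + INR d) * xi / (2 * INR N))
  * (2 * sinh ((2 * INR d + 1) * xi / (2 * INR N)))
  * prod_1_to l (fun k =>
      4 * sinh ((2 * INR d + 1 + INR k) * xi / (2 * INR N))
        * sinh ((2 * INR d + 1 - INR k) * xi / (2 * INR N))).

(** Every factor of [f_{d,l}] is positive and strictly increasing in [d]:
    the exponent [(2b+1)(d^2+d)] grows with [d], and every [sinh] argument
    [2d+1 +- k] grows with [d] and is still positive at [d-1] because
    [k <= l <= 2d-2]. Since [sinh] is increasing and positive on positive
    arguments, the comparison follows factor by factor. *)

From Stdlib Require Import Reals Lra Lia.
Open Scope R_scope.

Lemma sinh_pos (x : R) : 0 < x -> 0 < sinh x.
Proof. intro Hx; rewrite <- sinh_0; now apply sinh_lt. Qed.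

Lemma Rmult_div_lt_compat_r (a a' s t : R) :
  0 < s -> 0 < t -> a < a' -> a * s / t < a' * s / t.
Proof.
  intros Hs Ht Ha; unfold Rdiv.
  apply Rmult_lt_compat_r; [now apply Rinv_0_lt_compat|].
  now apply Rmult_lt_compat_r.
Qed.

Lemma sinh_scaled_lt (a a' s t : R) :
  0 < s -> 0 < t -> 0 < a -> a < a' -> 0 < sinh (a * s / t) < sinh (a' * s / t).
Proof.
  intros Hs Ht Ha Haa'; split.
  - apply sinh_pos; unfold Rdiv.
    apply Rmult_lt_0_compat; [now apply Rmult_lt_0_compat|now apply Rinv_0_lt_compat].
  - now apply sinh_lt, Rmult_div_lt_compat_r.
Qed.

Lemma Rmult_pos_lt_le_compat (a a' c c' : R) :
  0 < a < a' -> 0 < c <= c' -> 0 < a * c < a' * c'.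
Proof. intros [Ha Haa'] [Hc Hcc']; split; nra. Qed.

Lemma prod_1_to_pos_le_compat (h g : nat -> R) (l : nat) :
  (forall k, (1 <= k <= l)%nat -> 0 < h k <= g k) ->
  0 < prod_1_to l h <= prod_1_to l g.
Proof.
  induction l as [|l IH]; intros Hhg; simpl; [lra|].
  destruct IH as [Hpos Hle]; [intros k Hk; apply Hhg; lia|].
  destruct (Hhg (S l)) as [Hh Hhg']; [lia|].
  split; [now apply Rmult_lt_0_compat|].
  apply Rmult_le_compat; lra.
Qed.

Theorem lemma3p1 (xi : R) (b N : nat) (hxi : 0 < xi) (hN : (2 <= N)%nat)
  (d l : nat) (hd1 : (1 <= d)%nat) (hd2 : (d <= N - 1)%nat)
  (hl : (l <= 2 * d - 2)%nat) :
  fdl xi b N d l > fdl xi b N (d - 1) l.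
Proof.
  unfold fdl; rewrite (minus_INR d 1) by lia; simpl (INR 1).
  assert (HN : 0 < 2 * INR N) by (apply Rmult_lt_0_compat; [lra|apply lt_0_INR; lia]).
  assert (Hd : 1 <= INR d) by (apply (le_INR 1); lia).
  assert (Hb : 0 <= INR b) by apply pos_INR.
  assert (Hl : INR l <= 2 * INR d - 2).
  { replace (2 * INR d - 2) with (INR (2 * d - 2)) by (rewrite minus_INR, mult_INR by lia; simpl; ring).
    now apply le_INR. }
  assert (Hexp : 0 < exp ((2 * INR b + 1) * ((INR d - 1) ^ 2 + (INR d - 1)) * xi / (2 * INR N))
               < exp ((2 * INR b + 1) * (INR d ^ 2 + INR d) * xi / (2 * INR N))).
  { split; [apply exp_pos|]; apply exp_increasing, Rmult_div_lt_compat_r; nra. }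
  assert (Hsinh := sinh_scaled_lt (2 * (INR d - 1) + 1) (2 * INR d + 1) xi (2 * INR N)
                     hxi HN ltac:(lra) ltac:(lra)).
  apply Rlt_gt, Rmult_pos_lt_le_compat; [apply Rmult_pos_lt_le_compat; [exact Hexp|lra]|].
  apply prod_1_to_pos_le_compat; intros k Hk.
  assert (Hkl : 1 <= INR k <= INR l) by (split; [apply (le_INR 1)|apply le_INR]; lia).
  destruct (sinh_scaled_lt (2 * (INR d - 1) + 1 + INR k) (2 * INR d + 1 + INR k) xi (2 * INR N))
    as [Hp1 Hlt1]; [auto; lra ..|].
  destruct (sinh_scaled_lt (2 * (INR d - 1) + 1 - INR k) (2 * INR d + 1 - INR k) xi (2 * INR N))
    as [Hp2 Hlt2]; [auto; lra ..|].
  split; nra.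
Qed.
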